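(* (a) $\Delta'\in\mathbb{Q}[x_0,\ldots,x_4]$ is a symmetric polynomial, homogeneous of degree eight, and absolutely irreducible. (b) One has $\Delta'(0,x_1,\ldots,x_4)=D^2$ for a symmetric, homogeneous quartic form $D\in\mathbb{Q}[x_1,\ldots,x_4]$.
   Context: $$\Delta'(x_0,\ldots,x_4):=\prod_{i_1,\ldots,i_4\in\{0,1\}}\big(\sqrt{x_0}+(-1)^{i_1}\sqrt{x_1}+(-1)^{i_2}\sqrt{x_2}+(-1)^{i_3}\sqrt{x_3}+(-1)^{i_4}\sqrt{x_4}\big),$$ a priori an element of $\mathbb{Q}[\sqrt{x_0},\ldots,\sqrt{x_4}]$. *)

From HB Require Import structures.
From mathcomp Require Import all_boot all_order all_algebra all_field.
From mathcomp Require Import mpoly.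
Set Implicit Arguments. Unset Strict Implicit. Unset Printing Implicit Defensive.
Import GRing.Theory.
Local Open Scope ring_scope.

(* Variables y_0..y_4 of {mpoly rat[5]} stand for sqrt(x_0), ..., sqrt(x_4).
   A sign choice (i_1,...,i_4) in {0,1}^4 is a finite function 'I_4 -> bool. *)
Definition sqrt_factor (s : {ffun 'I_4 -> bool}) : {mpoly rat[5]} :=
  'X_ord0 + \sum_(i < 4) (-1) ^+ (s i) * 'X_(lift ord0 i).

(* Delta' written in the square roots: an element of Q[sqrt x_0,...,sqrt x_4]. *)
Definition DeltaSqrt : {mpoly rat[5]} :=
  \prod_(s : {ffun 'I_4 -> bool}) sqrt_factor s.

Definition squares (n : nat) : n.-tuple {mpoly rat[n]} :=
  [tuple ('X_i) ^+ 2 | i < n].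

Definition irreducible_mpoly (R : idomainType) (n : nat) (p : {mpoly R[n]}) :=
  [/\ p != 0, p \isn't a GRing.unit &
      forall a b : {mpoly R[n]}, p = a * b -> a \is a GRing.unit \/ b \is a GRing.unit].

Definition abs_irreducible_rat (n : nat) (p : {mpoly rat[n]}) :=
  irreducible_mpoly (map_mpoly (ratr : rat -> algC) p).

Definition set_x0_zero : 5.-tuple {mpoly rat[4]} :=
  [tuple of [:: 0; 'X_0; 'X_1; 'X_2; 'X_3]].

From HB Require Import structures.
From mathcomp Require Import all_boot all_order all_algebra all_field.
From mathcomp Require Import mpoly.
From mathcomp Require Import fingroup perm.
Set Implicit Arguments. Unset Strict Implicit. Unset Printing Implicit Defensive.
Import GRing.Theory Num.Theory.
Local Open Scope ring_scope.

(* Write y_0, ..., y_n for the square roots and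
   Delta_n(y) = prod_s (y_0 + sum_i (-1)^(s_i) y_(i+1)) over all sign vectors s.
   Flipping the sign of some y_(i+1) only permutes the factors, so y_1..y_n
   occur to even powers; Delta_n is homogeneous of even degree 2^n, so y_0 does
   too, and Delta_n = P(y^2).
   Taking also the sign of y_0 as a variable gives the full product
   prod_e sum_j (-1)^(e_j) y_j = Delta_n^2, which is plainly symmetric; hence
   every permutation maps Delta_n to +-Delta_n, and evaluating at unit vectors
   fixes the sign.  Setting y_0 = 0 in Delta_(n+1) gives the full product in n+1
   variables, i.e. the square of Delta_n, which is (b).
   If P = A B, then y_0 + y_1 + ... + y_n divides one of A(y^2), B(y^2), say
   A(y^2); this factor is invariant under all sign flips of y_1..y_n, so every
   factor of Delta_n divides A(y^2), and B(y^2), hence B, is a constant. *)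

Section Composition.
Variable R : comNzRingType.

Lemma comp_mpolyA n k l (p : {mpoly R[n]}) (t : n.-tuple {mpoly R[k]})
    (u : k.-tuple {mpoly R[l]}) :
  (p \mPo t) \mPo u = p \mPo [tuple tnth t i \mPo u | i < n].
Proof.
rewrite (comp_mpolyEX p t) (comp_mpolyEX p [tuple _ | i < n]) raddf_sum.
apply: eq_bigr => m _.
rewrite [LHS]linearZ /= !comp_mpolyX rmorph_prod /=; congr (_ *: _).
by apply: eq_bigr => i _; rewrite rmorphXn /= tnth_mktuple.
Qed.

Lemma comp_mpolyX_tnth n k (i : 'I_n) (t : n.-tuple {mpoly R[k]}) :
  'X_i \mPo t = tnth t i.
Proof. by rewrite comp_mpolyXU -tnth_nth. Qed.

Lemma eq_comp_mpoly n k (p : {mpoly R[n]}) (t u : n.-tuple {mpoly R[k]}) :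
  (forall i, tnth t i = tnth u i) -> p \mPo t = p \mPo u.
Proof. by move=> tu; congr (_ \mPo _); apply: eq_from_tnth. Qed.

Lemma comp_mpoly_idE n (p : {mpoly R[n]}) (t : n.-tuple {mpoly R[n]}) :
  (forall i, tnth t i = 'X_i) -> p \mPo t = p.
Proof.
move=> tX; rewrite -[RHS](comp_mpoly_id p).
by apply: eq_comp_mpoly => i; rewrite tX tnth_mktuple.
Qed.

Lemma msym_comp n (s : 'S_n) (p : {mpoly R[n]}) :
  msym s p = p \mPo [tuple 'X_(s i) | i < n].
Proof.
rewrite -[msym s p](comp_mpoly_id (msym s p)) msym_mPo.
by apply: eq_comp_mpoly => i; rewrite !tnth_mktuple.
Qed.

Lemma mcoeff_sum_inj n (p : {mpoly R[n]}) (f : 'X_{1..n} -> R)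
    (g : 'X_{1..n} -> 'X_{1..n}) m :
  injective g ->
  (\sum_(k <- msupp p) (p@_k * f k) *: 'X_[g k])@_(g m) = p@_m * f m.
Proof.
move=> g_inj; rewrite raddf_sum /=.
under eq_bigr => k _ do rewrite mcoeffZ mcoeffX (inj_eq g_inj).
have [mp|mNp] := boolP (m \in msupp p).
  rewrite (bigD1_seq m) //= ?msupp_uniq // eqxx mulr1 big1 ?addr0 // => k.
  by rewrite eq_sym => /negbTE ->; rewrite mulr0.
rewrite big1_seq; last first.
  move=> k /= kp; case: eqP => [km|_]; last by rewrite mulr0.
  by move: mNp; rewrite -km kp.
by rewrite memN_msupp_eq0 // mul0r.
Qed.

End Composition.

Section Squares.
Variable R : comNzRingType.

Definition msquares n : n.-tuple {mpoly R[n]} := [tuple 'X_i ^+ 2 | i < n].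

Lemma comp_msquaresX n (m : 'X_{1..n}) : 'X_[m] \mPo msquares n = 'X_[m *+ 2].
Proof.
rewrite comp_mpolyX -mpolyXn mpolyXE_id -prodrXl; apply: eq_bigr => i _.
by rewrite tnth_mktuple -!exprM mulnC.
Qed.

Lemma mulmn2_inj n : injective (fun m : 'X_{1..n} => (m *+ 2)%MM).
Proof.
move=> m1 m2 /= /(congr1 (fun m : 'X_{1..n} => m _)) m12; apply/mnmP => i.
by move: (m12 i); rewrite /= !mulmnE => /eqP; rewrite eqn_pmul2r // => /eqP.
Qed.

Lemma mcoeff_comp_msquares n (q : {mpoly R[n]}) m :
  (q \mPo msquares n)@_(m *+ 2) = q@_m.
Proof.
rewrite comp_mpolyEX.
under eq_bigr do rewrite comp_msquaresX -[q@__]mulr1.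
by rewrite (mcoeff_sum_inj _ _ _ (@mulmn2_inj n)) mulr1.
Qed.

Lemma comp_msquares_inj n : injective (comp_mpoly (msquares n)).
Proof.
move=> p q pq; apply/mpolyP => m.
by rewrite -(mcoeff_comp_msquares p) -(mcoeff_comp_msquares q) /= pq.
Qed.

Lemma comp_msquares_even n (p : {mpoly R[n]}) :
    (forall m, m \in msupp p -> forall j, ~~ odd (m j)) ->
  exists q, p = q \mPo msquares n.
Proof.
move=> p_even.
exists (\sum_(m <- msupp p) p@_m *: 'X_[[multinom (m j)./2 | j < n]]).
rewrite linear_sum {1}[p]mpolyE; apply: eq_big_seq => m mp.
rewrite linearZ /= comp_msquaresX; congr (_ *: 'X_[_]).
apply/mnmP => j; rewrite mulmnE mnmE muln2 -[LHS]odd_double_half.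
by rewrite (negbTE (p_even m mp j)) add0n.
Qed.

Lemma msym_comp_msquares n (s : 'S_n) (q : {mpoly R[n]}) :
  msym s (q \mPo msquares n) = msym s q \mPo msquares n.
Proof.
rewrite msym_comp comp_mpolyA msym_mPo; apply: eq_comp_mpoly => i.
by rewrite !tnth_mktuple rmorphXn /= comp_mpolyX_tnth tnth_mktuple.
Qed.

Lemma comp_msquares_sym n (q : {mpoly R[n]}) :
  (q \mPo msquares n \is symmetric) = (q \is symmetric).
Proof.
apply/issymP/issymP => q_sym s; last by rewrite msym_comp_msquares q_sym.
by apply: (@comp_msquares_inj n); rewrite /= -msym_comp_msquares q_sym.
Qed.

Lemma comp_msquares_homog n d (q : {mpoly R[n]}) :
  q \mPo msquares n \is (d * 2).-homog -> q \is d.-homog.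
Proof.
move=> q2_homog; apply/dhomogP => m mq.
have : (m *+ 2)%MM \in msupp (q \mPo msquares n).
  by rewrite mcoeff_msupp mcoeff_comp_msquares -mcoeff_msupp.
move/(dhomog_mf q2_homog) => /=; rewrite mdegMn => /eqP.
by rewrite eqn_pmul2r // => /eqP.
Qed.

End Squares.

(* Units of {mpoly R[n]} are by definition the constants with a unit value. *)
Lemma comp_msquares_unit (R : idomainType) n (q : {mpoly R[n]}) :
  (q \mPo msquares R n \is a GRing.unit) = (q \is a GRing.unit).
Proof.
have q0 : (q \mPo msquares R n)@_0 = q@_0.
  rewrite -[in RHS](mcoeff_comp_msquares q); congr (_@_ _).
  by apply/mnmP => i; rewrite mulmnE mnm0E.
apply/idP/idP => /andP[/eqP qC q0_unit]; apply/andP; rewrite q0 in q0_unit *;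
  split=> //; apply/eqP.
  by apply: (@comp_msquares_inj _ n); rewrite /= comp_mpolyC -q0.
by rewrite {1}qC comp_mpolyC.
Qed.

Section SignForms.
Variable R : comNzRingType.

Definition signed_sum n (s : {ffun 'I_n -> bool}) : {mpoly R[n.+1]} :=
  \sum_(i < n) (-1) ^+ s i *: 'X_(lift ord0 i).

Definition sign_form n (s : {ffun 'I_n -> bool}) : {mpoly R[n.+1]} :=
  'X_ord0 + signed_sum s.

Definition sign_prod n : {mpoly R[n.+1]} :=
  \prod_(s : {ffun 'I_n -> bool}) sign_form s.

Definition signed_form n (e : {ffun 'I_n -> bool}) : {mpoly R[n]} :=
  \sum_(j < n) (-1) ^+ e j *: 'X_j.

Definition subst_X0 n (c : {mpoly R[n.+1]}) : n.+1.-tuple {mpoly R[n.+1]} :=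
  [tuple if j == ord0 then c else 'X_j | j < n.+1].

Definition flip_coef n (r : {ffun 'I_n -> bool}) (j : 'I_n.+1) : R :=
  if unlift ord0 j is Some i then (-1) ^+ r i else 1.

Definition flip_signs n (r : {ffun 'I_n -> bool}) : n.+1.-tuple {mpoly R[n.+1]} :=
  [tuple flip_coef r j *: 'X_j | j < n.+1].

Definition xor_signs n (s r : {ffun 'I_n -> bool}) : {ffun 'I_n -> bool} :=
  [ffun i => s i (+) r i].

Definition neg_signs n (s : {ffun 'I_n -> bool}) : {ffun 'I_n -> bool} :=
  [ffun i => ~~ s i].

Definition cons_signs n (b : bool) (s : {ffun 'I_n -> bool}) :
    {ffun 'I_n.+1 -> bool} :=
  [ffun j => if unlift ord0 j is Some i then s i else b].

Definition zero_X0 n : n.+1.-tuple {mpoly R[n]} :=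
  [tuple if unlift ord0 j is Some i then 'X_i else 0 | j < n.+1].

Lemma xor_signsK n (r : {ffun 'I_n -> bool}) : involutive (@xor_signs n^~ r).
Proof. by move=> s; apply/ffunP => i; rewrite !ffunE addbK. Qed.

Lemma neg_signsK n : involutive (@neg_signs n).
Proof. by move=> s; apply/ffunP => i; rewrite !ffunE negbK. Qed.

Lemma cons_signs0 n b (s : {ffun 'I_n -> bool}) : cons_signs b s ord0 = b.
Proof. by rewrite ffunE unlift_none. Qed.

Lemma cons_signsS n b (s : {ffun 'I_n -> bool}) i :
  cons_signs b s (lift ord0 i) = s i.
Proof. by rewrite ffunE liftK. Qed.

Lemma big_cons_signs (T : Type) (idx : T) (op : Monoid.com_law idx) n
    (F : {ffun 'I_n.+1 -> bool} -> T) :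
  \big[op/idx]_e F e =
  \big[op/idx]_(b : bool) \big[op/idx]_(s : {ffun 'I_n -> bool}) F (cons_signs b s).
Proof.
rewrite pair_big /=.
rewrite (reindex (fun p : bool * {ffun 'I_n -> bool} => cons_signs p.1 p.2)) //=.
exists (fun e => (e ord0, [ffun i => e (lift ord0 i)])) => [[b s] _|e _] /=.
  by rewrite cons_signs0; congr pair; apply/ffunP => i; rewrite ffunE cons_signsS.
by apply/ffunP => j; rewrite ffunE; case: unliftP => [i ->|->]; rewrite ?ffunE.
Qed.

Lemma comp_signed_sum n k (s : {ffun 'I_n -> bool}) (t : n.+1.-tuple {mpoly R[k]}) :
  signed_sum s \mPo t = \sum_(i < n) (-1) ^+ s i *: tnth t (lift ord0 i).
Proof.
rewrite linear_sum; apply: eq_bigr => i _.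
by rewrite linearZ /= comp_mpolyX_tnth.
Qed.

Lemma signed_sum_neg n (s : {ffun 'I_n -> bool}) :
  signed_sum (neg_signs s) = - signed_sum s.
Proof.
rewrite /signed_sum -sumrN; apply: eq_bigr => i _.
by rewrite ffunE signrN scaleNr.
Qed.

Lemma meval_signed_sum n (s : {ffun 'I_n -> bool}) (v : 'I_n.+1 -> R) :
  (signed_sum s).@[v] = \sum_(i < n) (-1) ^+ s i * v (lift ord0 i).
Proof. by rewrite raddf_sum; apply: eq_bigr => i _; rewrite /= mevalZ mevalXU. Qed.

Lemma meval_signed_sum_unit n (s : {ffun 'I_n -> bool}) i :
  (signed_sum s).@[fun j => (j == lift ord0 i)%:R] = (-1) ^+ s i.
Proof.
rewrite meval_signed_sum (bigD1 i) //= eqxx mulr1 big1 ?addr0 // => i' i'i.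
by rewrite (inj_eq (@lift_inj _ ord0)) (negbTE i'i) mulr0.
Qed.

Lemma meval_sign_form n (s : {ffun 'I_n -> bool}) (v : 'I_n.+1 -> R) :
  (sign_form s).@[v] = v ord0 + (signed_sum s).@[v].
Proof. by rewrite mevalD mevalXU. Qed.

Lemma sign_form_homog n (s : {ffun 'I_n -> bool}) : sign_form s \is 1.-homog.
Proof.
rewrite rpredD ?rpred_sum // => [|i _]; last rewrite rpredZ //;
  by rewrite dhomogX /= mdeg1.
Qed.

Lemma sign_prod_homog n : sign_prod n \is (2 ^ n).-homog.
Proof.
have prod_homog (r : seq {ffun 'I_n -> bool}) :
    \prod_(s <- r) sign_form s \is (size r).-homog.
  elim: r => [|s r IHr]; first by rewrite big_nil dhomog1.
  by rewrite big_cons (dhomogM (sign_form_homog s) IHr).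
have size_enum : size (index_enum {ffun 'I_n -> bool}) = (2 ^ n)%N.
  by rewrite [index_enum _]unlock -enumT -cardT card_ffun card_bool card_ord.
by rewrite -size_enum; apply: prod_homog.
Qed.

(** * Sign flips *)

Lemma flip_coef0 n (r : {ffun 'I_n -> bool}) : flip_coef r ord0 = 1.
Proof. by rewrite /flip_coef unlift_none. Qed.

Lemma flip_coefS n (r : {ffun 'I_n -> bool}) i :
  flip_coef r (lift ord0 i) = (-1) ^+ r i.
Proof. by rewrite /flip_coef liftK. Qed.

Lemma flip_coefK n (r : {ffun 'I_n -> bool}) j : flip_coef r j * flip_coef r j = 1.
Proof.
by rewrite /flip_coef; case: unlift => [i|]; rewrite ?mulr1 // -expr2 sqrr_sign.
Qed.

Lemma signed_sum_flip n (s r : {ffun 'I_n -> bool}) :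
  signed_sum s \mPo flip_signs r = signed_sum (xor_signs s r).
Proof.
rewrite comp_signed_sum; apply: eq_bigr => i _.
by rewrite tnth_mktuple flip_coefS scalerA -signr_addb ffunE.
Qed.

Lemma sign_form_flip n (s r : {ffun 'I_n -> bool}) :
  sign_form s \mPo flip_signs r = sign_form (xor_signs s r).
Proof.
by rewrite comp_mpolyD comp_mpolyX_tnth tnth_mktuple flip_coef0 scale1r signed_sum_flip.
Qed.

Lemma sign_prod_flip n (r : {ffun 'I_n -> bool}) :
  sign_prod n \mPo flip_signs r = sign_prod n.
Proof.
rewrite rmorph_prod /=; under eq_bigr do rewrite sign_form_flip.
by rewrite [RHS](reindex_inj (can_inj (xor_signsK r))).
Qed.

Lemma comp_msquares_flip n (q : {mpoly R[n.+1]}) (r : {ffun 'I_n -> bool}) :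
  (q \mPo msquares R n.+1) \mPo flip_signs r = q \mPo msquares R n.+1.
Proof.
rewrite comp_mpolyA; apply: eq_comp_mpoly => i.
rewrite !tnth_mktuple rmorphXn /= comp_mpolyX_tnth tnth_mktuple exprZn.
by rewrite expr2 flip_coefK scale1r.
Qed.

Lemma flip_signsK n (r : {ffun 'I_n -> bool}) (p : {mpoly R[n.+1]}) :
  (p \mPo flip_signs r) \mPo flip_signs r = p.
Proof.
rewrite comp_mpolyA; apply: comp_mpoly_idE => i.
rewrite !tnth_mktuple comp_mpolyZ comp_mpolyX_tnth tnth_mktuple.
by rewrite scalerA flip_coefK scale1r.
Qed.

(** * Substituting for the first variable *)

Lemma subst_X0_lift n (c : {mpoly R[n.+1]}) i :
  tnth (subst_X0 c) (lift ord0 i) = 'X_(lift ord0 i).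
Proof. by rewrite tnth_mktuple eq_sym (negbTE (neq_lift _ _)). Qed.

Lemma comp_X0_subst n (c : {mpoly R[n.+1]}) : 'X_ord0 \mPo subst_X0 c = c.
Proof. by rewrite comp_mpolyX_tnth tnth_mktuple eqxx. Qed.

Lemma signed_sum_subst n (s : {ffun 'I_n -> bool}) (c : {mpoly R[n.+1]}) :
  signed_sum s \mPo subst_X0 c = signed_sum s.
Proof.
by rewrite comp_signed_sum; apply: eq_bigr => i _; rewrite subst_X0_lift.
Qed.

Lemma comp_subst_X0 n (p c d : {mpoly R[n.+1]}) :
  (p \mPo subst_X0 c) \mPo subst_X0 d = p \mPo subst_X0 (c \mPo subst_X0 d).
Proof.
rewrite comp_mpolyA; apply: eq_comp_mpoly => j; rewrite !tnth_mktuple.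
by case: eqP => [//|/eqP nj]; rewrite comp_mpolyX_tnth tnth_mktuple (negbTE nj).
Qed.

Lemma subst_X0_id n (p : {mpoly R[n.+1]}) : p \mPo subst_X0 'X_ord0 = p.
Proof. by apply: comp_mpoly_idE => j; rewrite tnth_mktuple; case: eqP => [->|]. Qed.

Lemma subst_X0_flip n (s r : {ffun 'I_n -> bool}) (p : {mpoly R[n.+1]}) :
  (p \mPo subst_X0 (- signed_sum (xor_signs s r))) \mPo flip_signs r =
  (p \mPo flip_signs r) \mPo subst_X0 (- signed_sum s).
Proof.
rewrite !comp_mpolyA; apply: eq_comp_mpoly => j; rewrite !tnth_mktuple.
case: (unliftP ord0 j) => [i ->|->].
  rewrite eq_sym (negbTE (neq_lift _ _)) comp_mpolyX_tnth tnth_mktuple.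
  by rewrite comp_mpolyZ comp_mpolyX_tnth subst_X0_lift.
by rewrite eqxx flip_coef0 scale1r comp_X0_subst comp_mpolyN signed_sum_flip xor_signsK.
Qed.

(* Split p into its monomials without X_0, which survive X_0 := 0, and the rest. *)
Lemma X0_dvd n (p : {mpoly R[n.+1]}) :
  p \mPo subst_X0 0 = 0 -> exists q, p = 'X_ord0 * q.
Proof.
move=> p0.
pose p' := \sum_(m <- msupp p | m ord0 == 0%N) p@_m *: 'X_[m].
pose q := \sum_(m <- msupp p | m ord0 != 0%N) p@_m *: 'X_[m - U_(ord0)].
have p_split : p = p' + 'X_ord0 * q.
  rewrite {1}[p]mpolyE (bigID (fun m : 'X_{1..n.+1} => m ord0 == 0%N)) /=.
  congr (_ + _); rewrite mulr_sumr; apply: eq_bigr => m m0.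
  rewrite -scalerAr -mpolyXD addmC submK //.
  by apply/mnm_lepP => i; rewrite mnm1E; case: eqP => [<-|]; rewrite ?lt0n.
have p'_subst : p' \mPo subst_X0 0 = p'.
  rewrite linear_sum; apply: eq_bigr => m /eqP m0.
  rewrite linearZ /= comp_mpolyX [in RHS]mpolyXE_id; congr (_ *: _).
  apply: eq_bigr => j _; rewrite tnth_mktuple; case: eqP => [->|//].
  by rewrite m0 !expr0.
have : p \mPo subst_X0 0 = p'.
  by rewrite {1}p_split comp_mpolyD p'_subst rmorphM /= comp_X0_subst mul0r addr0.
by rewrite p0 => p'0; exists q; rewrite p_split -p'0 add0r.
Qed.

Lemma sign_form_dvd n (s : {ffun 'I_n -> bool}) (p : {mpoly R[n.+1]}) :
  p \mPo subst_X0 (- signed_sum s) = 0 -> exists q, p = sign_form s * q.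
Proof.
move=> ps0; set p' := p \mPo subst_X0 ('X_ord0 - signed_sum s).
have p'0 : p' \mPo subst_X0 0 = 0.
  by rewrite comp_subst_X0 comp_mpolyB comp_X0_subst signed_sum_subst sub0r.
have [q p'E] := X0_dvd p'0; exists (q \mPo subst_X0 (sign_form s)).
have <- : p' \mPo subst_X0 (sign_form s) = p.
  rewrite comp_subst_X0 comp_mpolyB comp_X0_subst signed_sum_subst.
  by rewrite /sign_form addrK subst_X0_id.
by rewrite p'E rmorphM /= comp_X0_subst.
Qed.

Lemma sign_prod_subst n (s : {ffun 'I_n -> bool}) :
  sign_prod n \mPo subst_X0 (- signed_sum s) = 0.
Proof.
rewrite rmorph_prod /= (bigD1 s) //= comp_mpolyD comp_X0_subst signed_sum_subst.
by rewrite addNr mul0r.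
Qed.

(** * The full product of signed forms *)

Lemma signed_form_cons n b (s : {ffun 'I_n -> bool}) :
  signed_form (cons_signs b s) = (-1) ^+ b *: 'X_ord0 + signed_sum s.
Proof.
rewrite /signed_form big_ord_recl cons_signs0; congr (_ + _).
by apply: eq_bigr => i _; rewrite cons_signsS.
Qed.

Lemma prod_signed_form n :
  \prod_(e : {ffun 'I_n.+2 -> bool}) signed_form e = sign_prod n.+1 ^+ 2.
Proof.
rewrite big_cons_signs big_bool /= expr2; congr (_ * _); last first.
  by apply: eq_bigr => s _; rewrite signed_form_cons expr0 scale1r.
have formE s : signed_form (cons_signs true s) = - sign_form (neg_signs s).
  by rewrite signed_form_cons /sign_form signed_sum_neg scaleN1r opprD opprK.
under eq_bigr do rewrite formE -mulN1r.
rewrite big_split /= prodr_const card_ffun card_bool card_ord -signr_odd oddX.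
by rewrite mul1r [RHS](reindex_inj (can_inj (@neg_signsK n.+1))).
Qed.

Lemma msym_signed_form n (s : 'S_n) (e : {ffun 'I_n -> bool}) :
  msym s (signed_form e) = signed_form [ffun j => e ((s^-1)%g j)].
Proof.
rewrite msym_comp /signed_form linear_sum [RHS](reindex_inj (@perm_inj _ s)) /=.
apply: eq_bigr => j _; rewrite linearZ /= comp_mpolyX_tnth tnth_mktuple ffunE.
by rewrite permK.
Qed.

Lemma prod_signed_form_sym n :
  \prod_(e : {ffun 'I_n -> bool}) signed_form e \is symmetric.
Proof.
apply/issymP => s; rewrite rmorph_prod /=; under eq_bigr do rewrite msym_signed_form.
rewrite [RHS](reindex_inj (h := fun e : {ffun 'I_n -> bool} =>
  [ffun j => e ((s^-1)%g j)])) //.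
by move=> e1 e2 /ffunP e12; apply/ffunP => j; have := e12 (s j); rewrite !ffunE permK.
Qed.

Lemma sign_prod_zero_X0 n :
  sign_prod n \mPo zero_X0 n = \prod_(e : {ffun 'I_n -> bool}) signed_form e.
Proof.
rewrite rmorph_prod; apply: eq_bigr => s _ /=.
rewrite comp_mpolyD comp_mpolyX_tnth tnth_mktuple unlift_none add0r.
by rewrite comp_signed_sum; apply: eq_bigr => i _; rewrite tnth_mktuple liftK.
Qed.

Lemma comp_msquares_zero_X0 n (q : {mpoly R[n.+1]}) :
  (q \mPo zero_X0 n) \mPo msquares R n = (q \mPo msquares R n.+1) \mPo zero_X0 n.
Proof.
rewrite !comp_mpolyA; apply: eq_comp_mpoly => j.
rewrite !tnth_mktuple rmorphXn /= comp_mpolyX_tnth tnth_mktuple.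
by case: (unliftP ord0 j) => [i _|_]; rewrite ?comp_mpolyX_tnth ?tnth_mktuple
  ?comp_mpoly0 ?expr0n.
Qed.

Lemma sign_prod_eval0 n : (sign_prod n).@[fun _ => 0] = 0.
Proof.
rewrite rmorph_prod /= (bigD1 [ffun => false]) //= meval_sign_form.
by rewrite meval_signed_sum big1 ?addr0 ?mul0r // => i _; rewrite mulr0.
Qed.

Lemma sign_prod_eval_X0 n : (sign_prod n).@[fun j => (j == ord0)%:R] = 1.
Proof.
rewrite rmorph_prod /=; apply: big1 => s _.
rewrite meval_sign_form meval_signed_sum eqxx big1 ?addr0 // => i _.
by rewrite eq_sym (negbTE (neq_lift _ _)) mulr0.
Qed.

(* The value is the product of (-1)^(s_k) over all s, and half of the 2^(n+2)
   sign vectors have s_k = 1. *)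
Lemma sign_prod_eval_unit n (k : 'I_n.+3) :
  (sign_prod n.+2).@[fun j => (j == k)%:R] = 1.
Proof.
have [i ->|->] := unliftP ord0 k; last exact: sign_prod_eval_X0.
rewrite rmorph_prod /=.
under eq_bigr do rewrite meval_sign_form (negbTE (neq_lift _ _)) add0r
  meval_signed_sum_unit.
rewrite big_cons_signs big_bool /=.
have [i' ->|->] := unliftP ord0 i.
  under eq_bigr do rewrite cons_signsS.
  under [X in _ * X]eq_bigr do rewrite cons_signsS.
  by rewrite -expr2 -prodrXl; apply: big1 => s _; apply: sqrr_sign.
under eq_bigr do rewrite cons_signs0.
under [X in _ * X]eq_bigr do rewrite cons_signs0.
rewrite [X in _ * X]big1 // mulr1 prodr_const expr1 card_ffun card_bool card_ord.
by rewrite -signr_odd oddX.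
Qed.

End SignForms.

Section SignFormsNum.
Variable R : numFieldType.

Lemma sign_prod_sym n : sign_prod R n.+2 \is symmetric.
Proof.
apply/issymP => s.
have : msym s (sign_prod R n.+2) ^+ 2 = sign_prod R n.+2 ^+ 2.
  by rewrite -rmorphXn /= -prod_signed_form; apply/issymP/prod_signed_form_sym.
move/eqP; rewrite eqf_sqr => /orP[/eqP //|/eqP opp_sym]; exfalso.
have := congr1 (meval (fun j => (j == ord0)%:R)) opp_sym.
rewrite msym_comp comp_mpoly_meval mevalN.
rewrite (meval_eq (v2 := fun j => (j == (s^-1)%g ord0)%:R)); last first.
  move=> j; rewrite tnth_mktuple mevalXU.
  by rewrite -(inj_eq (@perm_inj _ (s^-1)%g)) permK.
rewrite sign_prod_eval_unit sign_prod_eval_X0 => /eqP.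
by rewrite -subr_eq0 opprK -mulr2n mulrn_eq0 oner_eq0.
Qed.

Lemma mcoeff_flip_unit n (p : {mpoly R[n.+1]}) (i : 'I_n) m :
  (p \mPo flip_signs R [ffun i' => i' == i])@_m =
  p@_m * (-1) ^+ m (lift ord0 i).
Proof.
pose r : {ffun 'I_n -> bool} := [ffun i' => i' == i].
have flipX k : 'X_[k] \mPo flip_signs R r = (-1) ^+ k (lift ord0 i) *: 'X_[k].
  rewrite comp_mpolyX [in RHS]mpolyXE_id.
  under eq_bigr do rewrite tnth_mktuple exprZn.
  rewrite scaler_prod; congr (_ *: _).
  rewrite (bigD1 (lift ord0 i)) //= flip_coefS ffunE eqxx expr1 big1 ?mulr1 //.
  move=> j; case: (unliftP ord0 j) => [i' ->|->] ji; last first.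
    by rewrite flip_coef0 expr1n.
  rewrite flip_coefS /r ffunE; case: eqP => [i'i|_]; last by rewrite expr0 expr1n.
  by rewrite i'i eqxx in ji.
rewrite comp_mpolyEX; under eq_bigr do rewrite flipX scalerA.
exact: (mcoeff_sum_inj p (fun k => (-1) ^+ k (lift ord0 i)) m (@inj_id _)).
Qed.

Lemma flip_invariant_even n (p : {mpoly R[n.+1]}) :
    (forall r, p \mPo flip_signs R r = p) ->
  forall m, m \in msupp p -> forall i, ~~ odd (m (lift ord0 i)).
Proof.
move=> p_inv m mp i; apply/negP => m_odd.
have := mcoeff_flip_unit p i m; rewrite p_inv -signr_odd m_odd expr1 mulrN1.
move=> /eqP; rewrite -subr_eq0 opprK -mulr2n mulrn_eq0 /=.
by rewrite mcoeff_eq0 mp.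
Qed.

Lemma homog_even_X0 n d (p : {mpoly R[n.+1]}) m :
    p \is d.-homog -> ~~ odd d -> m \in msupp p ->
  (forall i, ~~ odd (m (lift ord0 i))) -> ~~ odd (m ord0).
Proof.
move=> p_homog d_even mp m_even.
have := dhomog_mf p_homog mp; rewrite /= mdegE big_ord_recl => md.
have rest_even : ~~ odd (\sum_(i < n) m (lift ord0 i)).
  by elim/big_ind: _ => // x y; rewrite oddD => /negbTE-> /negbTE->.
by move: d_even; rewrite -md oddD (negbTE rest_even) addbF.
Qed.

Lemma sign_prod_msquares n : exists q, sign_prod R n.+1 = q \mPo msquares R n.+2.
Proof.
have flip_even := flip_invariant_even (@sign_prod_flip R n.+1).
apply: comp_msquares_even => m mp j; have [i ->|->] := unliftP ord0 j.
  exact: flip_even.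
apply: (homog_even_X0 (sign_prod_homog R n.+1)) mp (flip_even m mp).
by rewrite oddX.
Qed.

(** * Irreducibility *)

Lemma sign_prod_neq0 n : sign_prod R n != 0.
Proof.
apply: contra_eq_neq (sign_prod_eval_X0 R n) => ->.
by rewrite meval0 eq_sym oner_neq0.
Qed.

Lemma sign_form_subst_neq0 n (s s' : {ffun 'I_n -> bool}) :
  s' != s -> sign_form R s' \mPo subst_X0 (- signed_sum R s) != 0.
Proof.
move=> /eqP s's; have [i si] : exists i, s' i != s i.
  apply/existsP; apply: contra_notT s's => /existsPn ss'.
  by apply/ffunP => i; apply/eqP; rewrite -[_ == _]negbK ss'.
apply/eqP => /(congr1 (meval (fun j => (j == lift ord0 i)%:R))).
rewrite meval0 comp_mpolyD comp_X0_subst signed_sum_subst mevalD mevalN.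
rewrite !meval_signed_sum_unit (_ : s' i = ~~ s i); last by case: (s i) (s' i) si => [] [].
by rewrite signrN -opprD => /eqP; rewrite oppr_eq0 -mulr2n mulrn_eq0 signr_eq0.
Qed.

Lemma sign_forms_dvd n (p : {mpoly R[n.+1]}) (L : seq {ffun 'I_n -> bool}) :
    uniq L -> (forall s, s \in L -> p \mPo subst_X0 (- signed_sum R s) = 0) ->
  exists q, p = (\prod_(s <- L) sign_form R s) * q.
Proof.
elim: L p => [|s L IHL] p; first by move=> _ _; exists p; rewrite big_nil mul1r.
move=> /andP[sL uL] p0; have [p' pE] := sign_form_dvd (p0 s (mem_head _ _)).
have [|q p'E] := IHL p' uL; last by exists q; rewrite pE p'E big_cons mulrA.
move=> s' s'L; have := p0 s'; rewrite in_cons s'L orbT pE rmorphM /=.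
move=> /(_ isT) /eqP; rewrite mulf_eq0 => /orP[|/eqP //].
by rewrite (negbTE (sign_form_subst_neq0 _)) //; apply: contraNneq sL => ->.
Qed.

Lemma flip_invariant_dvd n (a : {mpoly R[n.+1]}) :
    (forall r, a \mPo flip_signs R r = a) ->
    a \mPo subst_X0 (- signed_sum R [ffun => false]) = 0 ->
  exists q, a = sign_prod R n * q.
Proof.
move=> a_inv a0; apply: sign_forms_dvd (index_enum_uniq _) _ => s _.
have := subst_X0_flip [ffun => false] s a; rewrite a_inv a0.
have -> : xor_signs [ffun => false] s = s by apply/ffunP => i; rewrite !ffunE.
by move/(congr1 (comp_mpoly (flip_signs R s))); rewrite flip_signsK comp_mpoly0.
Qed.

Lemma factor_comp_msquares_unit n (A B : {mpoly R[n.+1]}) :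
    (A * B) \mPo msquares R n.+1 = sign_prod R n ->
    (A \mPo msquares R n.+1) \mPo subst_X0 (- signed_sum R [ffun => false]) = 0 ->
  B \is a GRing.unit.
Proof.
move=> ABE a0; have [q aE] := flip_invariant_dvd (comp_msquares_flip A) a0.
rewrite -comp_msquares_unit; apply/unitrP; exists q.
have : sign_prod R n * (q * (B \mPo msquares R n.+1)) = sign_prod R n * 1.
  by rewrite mulr1 mulrA -aE -rmorphM.
by move/(mulfI (sign_prod_neq0 n)) => qb; rewrite qb mulrC qb.
Qed.

Lemma irreducible_sign_prod_msquares n (P : {mpoly R[n.+1]}) :
  P \mPo msquares R n.+1 = sign_prod R n -> irreducible_mpoly P.
Proof.
move=> PE; split.
- by apply: contraNneq (sign_prod_neq0 n) => P0; rewrite -PE P0 comp_mpoly0.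
- rewrite -comp_msquares_unit PE; apply/negP => /unitrP[y [_]].
  move/(congr1 (meval (fun _ => 0))).
  by rewrite mevalM sign_prod_eval0 mul0r meval1 => /eqP; rewrite eq_sym oner_eq0.
- move=> A B PAB; have := sign_prod_subst R (n := n) [ffun => false].
  rewrite -PE PAB !rmorphM /= => /eqP; rewrite mulf_eq0 => /orP[/eqP a0|/eqP b0].
    by right; apply: factor_comp_msquares_unit a0; rewrite -PAB.
  by left; apply: factor_comp_msquares_unit b0; rewrite mulrC -PAB.
Qed.

End SignFormsNum.

Lemma map_sign_prod (F : numFieldType) (f : {rmorphism rat -> F}) n :
  map_mpoly f (sign_prod rat n) = sign_prod F n.
Proof.
rewrite rmorph_prod; apply: eq_bigr => s _ /=.
rewrite rmorphD /= map_mpolyX rmorph_sum; congr (_ + _).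
by apply: eq_bigr => i _ /=; rewrite map_mpolyZ map_mpolyX rmorph_sign.
Qed.

Lemma DeltaSqrtE : DeltaSqrt = sign_prod rat 4.
Proof.
apply: eq_bigr => s _; congr (_ + _).
by apply: eq_bigr => i _; rewrite mulr_sign scaler_sign.
Qed.

Lemma set_x0_zeroE : set_x0_zero = zero_X0 rat 4.
Proof.
apply: eq_from_tnth => j; rewrite tnth_mktuple.
have [[[|[|[|[|k]]]] Hk] ->|->] := unliftP ord0 j; rewrite //= /set_x0_zero /tnth //=;
  by congr (mpolyX _ (mnm1 _)); apply: val_inj.
Qed.

Theorem mainTheorem7 :
  exists Delta' : {mpoly rat[5]},
    DeltaSqrt = Delta' \mPo squares 5 /\
    Delta' \is symmetric /\ Delta' \is 8.-homog /\ abs_irreducible_rat Delta' /\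
    (exists D : {mpoly rat[4]},
       D \is symmetric /\ D \is 4.-homog /\ Delta' \mPo set_x0_zero = D ^+ 2).
Proof.
have [P PE] := sign_prod_msquares rat 3.
have [D DE] := sign_prod_msquares rat 2.
exists P; split; first by rewrite DeltaSqrtE PE.
split; first by rewrite -comp_msquares_sym -PE sign_prod_sym.
split; first by apply: (comp_msquares_homog (d := 8)); rewrite -PE sign_prod_homog.
split.
  apply: irreducible_sign_prod_msquares.
  rewrite -(map_sign_prod ratr) PE map_mpoly_comp; last exact: fmorph_inj.
  congr (_ \mPo _); apply: eq_from_tnth => i.
  by rewrite [RHS]tnth_map !tnth_mktuple rmorphXn /= map_mpolyX.
exists D; split; first by rewrite -comp_msquares_sym -DE sign_prod_sym.
split; first by apply: (comp_msquares_homog (d := 4)); rewrite -DE sign_prod_homog.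
apply: (@comp_msquares_inj _ 4); rewrite /= set_x0_zeroE comp_msquares_zero_X0 -PE.
by rewrite sign_prod_zero_X0 prod_signed_form rmorphXn /= -DE.
Qed.
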